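(* Let $p_k(x,y)=\frac{1}{\pi}\frac{y}{(x-2\pi k)^2+y^2}$ for $k\in\mathbb{Z}$ and $h(x,y)=\frac{1}{2\pi}\frac{\sinh y}{\cosh y-\cos x}$, for $x\in\mathbb{R}$, $y>0$. For $y>0$ and $n\in\mathbb{Z}\setminus\{0\}$, \[ \int_{-\infty}^\infty h^{-1}(x,y)\,H\nabla p_0(x,y)\cdot\nabla p_n(x,y)\,dx+2\int_{-\infty}^\infty p_n(x,y)\,H\nabla p_0(x,y)\cdot\nabla h^{-1}(x,y)\,dx \] \[ =\frac{\pi n(3y^2-\pi^2n^2)}{(y^2+\pi^2n^2)^3}+\frac{y^2}{\pi n(y^2+\pi^2n^2)\sinh^2 y}. \]
   Context: $\nabla=(\partial_x,\partial_y)$; $H\nabla f=(-\partial_y f,\partial_x f)$ (i.e. $H=\begin{pmatrix}0&-1\\1&0\end{pmatrix}$); $h^{-1}=1/h$; the dot is the Euclidean inner product. *)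

From Stdlib Require Import Reals.
From Coquelicot Require Export Coquelicot.
Open Scope R_scope.

Definition pk (k : Z) (x y : R) : R :=
  / PI * (y / ((x - 2 * PI * IZR k) ^ 2 + y ^ 2)).

Definition h (x y : R) : R := / (2 * PI) * (sinh y / (cosh y - cos x)).

Definition hinv (x y : R) : R := / h x y.

Definition dx (f : R -> R -> R) (x y : R) : R := Derive (fun t => f t y) x.
Definition dy (f : R -> R -> R) (x y : R) : R := Derive (fun t => f x t) y.

(* (H grad f) . (grad g), with H grad f = (-d_y f, d_x f) *)
Definition Hgrad_dot (f g : R -> R -> R) (x y : R) : R :=
  (- dy f x y) * dx g x y + dx f x y * dy g x y.

Definition is_int_R (f : R -> R) (I : R) : Prop :=
  is_RInt_gen f (Rbar_locally m_infty) (Rbar_locally p_infty) I.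

(* Write [P_s(x, y) = y / ((x - s)^2 + y^2)], so that [p_k = P_(2 pi k) / pi], and note that
   [1 / h = 2 pi (cosh y - cos x) / sinh y] is a trigonometric polynomial in [x].  Both
   integrands are therefore products of derivatives of [P_0] with [P_c] or its derivatives,
   [c = 2 pi n], weighted by [1], [cos x] or [sin x].  Partial fractions in [x + i y] rewrite each such product as a
   combination of [P], [d_x P] and [d_y P] centred at [0] and at [c], plus the difference of the
   conjugate kernels [(x - s) / ((x - s)^2 + y^2)] at the two centres.  The weights are
   [2 pi]-periodic, so the terms centred at [c] integrate like those centred at [0] and the
   conjugate difference telescopes to [0].  What remains reduces to the Fourier integral
   [int cos x P_0(x, y) dx = pi e^(-y)], obtained by showing that it solves [F'' = F] on
   [(0, +oo)], stays bounded, and tends to [pi] as [y -> 0]. *)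

From Stdlib Require Import Reals Lra Psatz ZArith.
From Coquelicot Require Import Coquelicot.
Open Scope R_scope.

Lemma ex_RInt_of_continuous (f : R -> R) :
  (forall x, continuous f x) -> forall a b, ex_RInt f a b.
Proof.
  intros H a b. apply (ex_RInt_continuous (V := R_CompleteNormedModule)).
  intros; apply H.
Qed.

Lemma continuous_mult_fun (f g : R -> R) :
  (forall x, continuous f x) -> (forall x, continuous g x) ->
  forall x, continuous (fun x => f x * g x) x.
Proof. intros Hf Hg x. apply (continuous_mult f g); auto. Qed.

Lemma continuous_shift (f : R -> R) (s : R) :
  (forall x, continuous f x) -> forall x, continuous (fun x => f (x + s)) x.
Proof.
  intros Hc x. apply continuous_comp; auto.
  apply (continuous_plus (fun x => x) (fun _ => s)).
  - apply continuous_id.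
  - apply continuous_const.
Qed.

Lemma RInt_abs_le (f g : R -> R) (a b : R) :
  (forall x, continuous f x) -> (forall x, continuous g x) ->
  (forall x, Rabs (f x) <= g x) ->
  Rabs (RInt f a b) <= Rabs (RInt g a b).
Proof.
  intros Hf Hg Hfg.
  pose proof (ex_RInt_of_continuous f Hf) as Ef.
  pose proof (ex_RInt_of_continuous g Hg) as Eg.
  assert (Ea : forall a b, ex_RInt (fun t => Rabs (f t)) a b).
  { apply ex_RInt_of_continuous. intros x.
    apply continuous_comp; [apply Hf | apply continuous_Rabs]. }
  assert (Hle : forall a b, a <= b -> Rabs (RInt f a b) <= RInt g a b).
  { intros a' b' Hab. eapply Rle_trans; [apply abs_RInt_le; auto|].
    apply RInt_le; auto. }
  destruct (Rle_dec a b) as [Hab|Hab].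
  - eapply Rle_trans; [apply Hle; auto | apply Rle_abs].
  - rewrite <- (opp_RInt_swap f), <- (opp_RInt_swap g) by auto.
    unfold opp; simpl. rewrite !Rabs_Ropp.
    eapply Rle_trans; [apply Hle; lra | apply Rle_abs].
Qed.

Lemma RInt_abs_le_const (f : R -> R) (a b B : R) :
  (forall x, continuous f x) ->
  (forall t, Rmin a b <= t <= Rmax a b -> Rabs (f t) <= B) ->
  Rabs (RInt f a b) <= Rabs (b - a) * B.
Proof.
  intros Hc HB. pose proof (ex_RInt_of_continuous f Hc) as E.
  destruct (Rle_dec a b) as [Hab|Hab].
  - rewrite (Rabs_right (b - a)) by lra. apply abs_RInt_le_const; auto.
    intros t Ht. apply HB. rewrite Rmin_left, Rmax_right; lra.
  - rewrite <- (opp_RInt_swap f) by auto. unfold opp; simpl.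
    rewrite Rabs_Ropp, (Rabs_left (b - a)) by lra.
    replace (- (b - a)) with (a - b) by ring.
    apply abs_RInt_le_const; auto; [lra|].
    intros t Ht. apply HB. rewrite Rmin_right, Rmax_left; lra.
Qed.

Lemma RInt_shift (f : R -> R) (s a b : R) :
  (forall x, continuous f x) ->
  RInt (fun x => f (x + s)) a b = RInt f (a + s) (b + s).
Proof.
  intros Hc.
  rewrite <- (RInt_ext (fun x => scal 1 (f (1 * x + s)))).
  - replace (a + s) with (1 * a + s) by ring. replace (b + s) with (1 * b + s) by ring.
    exact (RInt_comp_lin (V := R_CompleteNormedModule) f 1 s a b
             (ex_RInt_of_continuous f Hc _ _)).
  - intros x _. unfold scal; simpl; unfold mult; simpl. rewrite !Rmult_1_l. reflexivity.
Qed.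

Lemma RInt_odd (f : R -> R) (L : R) :
  (forall x, continuous f x) -> (forall x, f (- x) = - f x) -> RInt f (- L) L = 0.
Proof.
  intros Hc Ho. pose proof (ex_RInt_of_continuous f Hc) as E.
  assert (Hrefl : RInt f (- L) L = RInt f L (- L)).
  { pose proof (RInt_comp_lin (V := R_CompleteNormedModule) f (-1) 0 (- L) L (E _ _)) as C.
    replace (-1 * - L + 0) with L in C by ring. replace (-1 * L + 0) with (- L) in C by ring.
    rewrite <- C. apply RInt_ext. intros x _. unfold scal; simpl; unfold mult; simpl.
    replace (-1 * x + 0) with (- x) by ring. rewrite Ho. ring. }
  pose proof (opp_RInt_swap f (- L) L (E _ _)) as Hswap.
  unfold opp in Hswap; simpl in Hswap. lra.
Qed.

Lemma RInt_Chasles_cont f a b c :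
  (forall x, continuous f x) -> RInt f a b + RInt f b c = RInt f a c.
Proof.
  intros Hc. apply (RInt_Chasles (V := R_CompleteNormedModule)); apply ex_RInt_of_continuous, Hc.
Qed.

Lemma Rabs_div_le_inv (a q r K : R) :
  0 < q -> 0 < r -> Rabs a * r <= K * q -> Rabs (a / q) <= K * / r.
Proof.
  intros Hq Hr H. unfold Rdiv.
  rewrite Rabs_mult, (Rabs_right (/ q)) by (apply Rle_ge, Rlt_le, Rinv_0_lt_compat; auto).
  apply Rmult_le_reg_r with (q * r); [nra|].
  replace (Rabs a * / q * (q * r)) with (Rabs a * r) by (field; lra).
  replace (K * / r * (q * r)) with (K * q) by (field; lra). auto.
Qed.

Lemma Rabs_mult_div_le (x a q K : R) :
  0 < q -> Rabs (x * a) <= K * q -> Rabs x * Rabs (a / q) <= K.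
Proof.
  intros Hq H. rewrite <- Rabs_mult.
  replace (x * (a / q)) with (x * a / q) by (field; lra).
  unfold Rdiv.
  rewrite Rabs_mult, (Rabs_right (/ q)) by (apply Rle_ge, Rlt_le, Rinv_0_lt_compat; auto).
  apply Rmult_le_reg_r with q; auto. rewrite Rmult_assoc, Rinv_l, Rmult_1_r by lra. lra.
Qed.

Lemma Rabs_cos_mult_le x a : Rabs (cos x * a) <= Rabs a.
Proof.
  rewrite Rabs_mult. pose proof (COS_bound x). pose proof (Rabs_pos a).
  assert (Rabs (cos x) <= 1) by (apply Rabs_le; lra). nra.
Qed.

Lemma Rabs_sin_mult_le x a : Rabs (sin x * a) <= Rabs a.
Proof.
  rewrite Rabs_mult. pose proof (SIN_bound x). pose proof (Rabs_pos a).
  assert (Rabs (sin x) <= 1) by (apply Rabs_le; lra). nra.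
Qed.

Lemma Rabs_sin_le z : Rabs (sin z) <= Rabs z.
Proof.
  pose proof (bounded_variation sin cos 1 0 z) as H.
  rewrite sin_0, !Rminus_0_r, Rmult_1_l in H. apply H.
  intros t _. split; [apply is_derive_Reals, derivable_pt_lim_sin | apply Rabs_le, COS_bound].
Qed.

Lemma one_minus_cos_le x : 0 <= 1 - cos x <= 4 * x ^ 2 / (1 + x ^ 2).
Proof.
  pose proof (cos_2a_sin (x / 2)) as E. replace (2 * (x / 2)) with x in E by field.
  pose proof (Rabs_sin_le (x / 2)) as S1. pose proof (SIN_bound (x / 2)) as S2.
  set (s := sin (x / 2)) in *.
  assert (Hsx : s ^ 2 <= (x / 2) ^ 2)
    by (rewrite <- (pow2_abs s), <- (pow2_abs (x / 2));
        apply pow_incr; split; [apply Rabs_pos | auto]).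
  pose proof (pow2_ge_0 x) as Hx.
  split; [nra|].
  apply Rmult_le_reg_r with (1 + x ^ 2); [lra|].
  replace (4 * x ^ 2 / (1 + x ^ 2) * (1 + x ^ 2)) with (4 * x ^ 2) by (field; lra).
  assert (Hs1 : s ^ 2 <= 1) by nra.
  apply Rmult_le_compat_r with (r := x ^ 2) in Hs1; [|lra].
  rewrite E. nra.
Qed.

Lemma exp_neg_mult_lt z : exp (- z) * z < 1.
Proof.
  rewrite exp_Ropp. pose proof (exp_pos z). pose proof (exp_ineq1_le z).
  apply Rmult_lt_reg_l with (exp z); auto.
  rewrite <- Rmult_assoc, Rinv_r, Rmult_1_l, Rmult_1_r by lra. lra.
Qed.

Lemma periodic_2PI_IZR (f : R -> R) :
  (forall x k, f (x + 2 * INR k * PI) = f x) -> forall x n, f (x - 2 * PI * IZR n) = f x.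
Proof.
  intros Hp x n. destruct (Z_le_gt_dec 0 n) as [Hn|Hn].
  - destruct (Z_of_nat_complete n Hn) as [k ->]. rewrite <- INR_IZR_INZ.
    rewrite <- (Hp (x - 2 * PI * INR k) k). f_equal. ring.
  - destruct (Z_of_nat_complete (- n)) as [k Hk]; [lia|].
    replace n with (- Z.of_nat k)%Z by lia. rewrite opp_IZR, <- INR_IZR_INZ.
    rewrite <- (Hp x k). f_equal. ring.
Qed.

Lemma atan_abs_le z : Rabs (atan z) <= Rabs z.
Proof.
  pose proof (bounded_variation atan (fun t => / (1 + t ^ 2)) 1 0 z) as H.
  rewrite atan_0, !Rminus_0_r, Rmult_1_l in H. apply H.
  intros t _. pose proof (pow2_ge_0 t). split.
  - apply is_derive_Reals, derivable_pt_lim_atan.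
  - rewrite Rabs_right by (apply Rle_ge, Rlt_le, Rinv_0_lt_compat; lra).
    rewrite <- Rinv_1. apply Rinv_le_contravar; lra.
Qed.

Lemma atan_pi2_dist z : 0 < z -> Rabs (atan z - PI / 2) <= / z.
Proof.
  intros Hz. rewrite <- (Rinv_inv z) at 1. rewrite atan_inv by (apply Rinv_0_lt_compat; lra).
  replace (PI / 2 - atan (/ z) - PI / 2) with (- atan (/ z)) by ring.
  rewrite Rabs_Ropp. eapply Rle_trans; [apply atan_abs_le|].
  rewrite Rabs_right by (apply Rle_ge, Rlt_le, Rinv_0_lt_compat; lra). lra.
Qed.

Lemma is_lim_atan_div_p_infty y : 0 < y -> is_lim (fun x => atan (x / y)) p_infty (PI / 2).
Proof.
  intros Hy. apply is_lim_spec. intros eps.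
  exists (y / eps). intros x Hx.
  assert (0 < y / eps) by (apply Rdiv_lt_0_compat; [lra | apply cond_pos]).
  eapply Rle_lt_trans; [apply atan_pi2_dist, Rdiv_lt_0_compat; lra|].
  rewrite Rinv_div. apply Rmult_lt_reg_r with (x / y); [apply Rdiv_lt_0_compat; lra|].
  replace (y / x * (x / y)) with 1 by (field; lra).
  apply Rmult_lt_reg_l with (/ eps); [apply Rinv_0_lt_compat, cond_pos|].
  pose proof (cond_pos eps).
  replace (/ eps * (eps * (x / y))) with (x / y) by (field; lra).
  apply Rmult_lt_reg_r with y; auto.
  replace (x / y * y) with x by (field; lra). unfold Rdiv in Hx. lra.
Qed.

Lemma is_lim_atan_div_m_infty y : 0 < y -> is_lim (fun x => atan (x / y)) m_infty (- (PI / 2)).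
Proof.
  intros Hy.
  apply (is_lim_ext (fun x => - atan (- x / y))).
  { intros x. replace (- x / y) with (- (x / y)) by (field; lra). rewrite atan_opp. ring. }
  apply (is_lim_opp (fun x => atan (- x / y)) m_infty (PI / 2)).
  apply (is_lim_comp (fun x => atan (x / y)) Ropp m_infty (PI / 2) p_infty).
  - apply is_lim_atan_div_p_infty; auto.
  - apply (is_lim_opp (fun x => x) m_infty m_infty), is_lim_id.
  - exists 0. intros; discriminate.
Qed.

(** * Improper integrals over the real line *)

Section ImproperIntegral.
Implicit Types (f g : R -> R).

Lemma is_int_R_ext f g I : (forall x, f x = g x) -> is_int_R f I -> is_int_R g I.
Proof.
  intros H. apply (is_RInt_gen_ext (V := R_CompleteNormedModule) f g), filter_forall.
  intros [a b] x _. apply H.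
Qed.

Lemma is_int_R_unique f I J : is_int_R f I -> is_int_R f J -> I = J.
Proof.
  intros HI HJ. apply (is_RInt_gen_unique f) in HI. apply (is_RInt_gen_unique f) in HJ.
  congruence.
Qed.

Lemma is_int_R_plus f g I J :
  is_int_R f I -> is_int_R g J -> is_int_R (fun x => f x + g x) (I + J).
Proof. apply (is_RInt_gen_plus f g). Qed.

Lemma is_int_R_minus f g I J :
  is_int_R f I -> is_int_R g J -> is_int_R (fun x => f x - g x) (I - J).
Proof. apply (is_RInt_gen_minus f g). Qed.

Lemma is_int_R_scal k f I : is_int_R f I -> is_int_R (fun x => k * f x) (k * I).
Proof. apply (is_RInt_gen_scal f k). Qed.

Lemma filter_prod_infty (P : R * R -> Prop) :
  filter_prod (Rbar_locally m_infty) (Rbar_locally p_infty) P ->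
  exists M, forall a b, a < - M -> M < b -> P (a, b).
Proof.
  intros [Q1 Q2 [M1 HM1] [M2 HM2] HQ].
  exists (Rmax (Rabs M1) (Rabs M2)). intros a b Ha Hb.
  pose proof (Rmax_l (Rabs M1) (Rabs M2)). pose proof (Rmax_r (Rabs M1) (Rabs M2)).
  pose proof (Rle_abs (- M1)). rewrite Rabs_Ropp in *. pose proof (Rle_abs M2).
  apply HQ; [apply HM1 | apply HM2]; lra.
Qed.

Definition RInt_cv f (I : R) : Prop :=
  forall eps, 0 < eps ->
    exists M, forall a b, a < - M -> M < b -> Rabs (RInt f a b - I) < eps.

Lemma is_int_R_RInt_cv f I : is_int_R f I -> RInt_cv f I.
Proof.
  intros H eps Heps.
  destruct (filter_prod_infty _ (H (ball I (mkposreal eps Heps)) (locally_ball _ _)))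
    as [M HM].
  exists M. intros a b Ha Hb. destruct (HM a b Ha Hb) as [v [Hv Hball]].
  simpl in Hv. rewrite (is_RInt_unique _ _ _ _ Hv). exact Hball.
Qed.

Lemma RInt_cv_is_int_R f I :
  (forall x, continuous f x) -> RInt_cv f I -> is_int_R f I.
Proof.
  intros Hc H P [eps HP].
  destruct (H eps (cond_pos eps)) as [M HM].
  apply Filter_prod with (fun a => a < - M) (fun b => M < b).
  - exists (- M); auto.
  - exists M; auto.
  - intros a b Ha Hb. exists (RInt f a b). split.
    + apply (RInt_correct (V := R_CompleteNormedModule)), ex_RInt_of_continuous, Hc.
    + apply HP, HM; auto.
Qed.

Lemma is_int_R_dominated f g J :
  (forall x, continuous f x) -> (forall x, continuous g x) ->
  (forall x, Rabs (f x) <= g x) -> is_int_R g J -> exists I, is_int_R f I.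
Proof.
  intros Hf Hg Hfg HJ.
  set (F := filter_prod (Rbar_locally m_infty) (Rbar_locally p_infty)).
  assert (PF : ProperFilter F) by (apply filter_prod_proper; apply Rbar_locally_filter).
  destruct (proj1 (filterlim_locally_cauchy (U := R_CompleteSpace) (F := F)
              (fun ab : R * R => RInt f (fst ab) (snd ab)))) as [I HI].
  - intros [eps Heps].
    destruct (is_int_R_RInt_cv g J HJ (eps / 4)) as [M HM]; [lra|].
    exists (fun ab : R * R => fst ab < - M /\ M < snd ab). split.
    + apply Filter_prod with (fun a => a < - M) (fun b => M < b);
        [exists (- M) | exists M | ]; simpl; auto.
    + intros [a b] [a' b'] [Ha Hb] [Ha' Hb']; simpl in *.
      change (Rabs (RInt f a' b' - RInt f a b) < eps).
      (* the two integrals differ by two tails, each controlled by a difference of integrals of g *)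
      replace (RInt f a' b' - RInt f a b) with (RInt f a' a + RInt f b b')
        by (rewrite <- (RInt_Chasles_cont f a' a b'), <- (RInt_Chasles_cont f a b b') by auto;
            lra).
      assert (Hg2 : forall u v u' v', u < - M -> M < v -> u' < - M -> M < v' ->
                      Rabs (RInt g u v - RInt g u' v') < eps / 2).
      { intros u v u' v' Hu Hv Hu' Hv'.
        pose proof (HM u v Hu Hv) as H1. pose proof (HM u' v' Hu' Hv') as H2.
        apply Rabs_lt_between' in H1, H2. apply Rabs_lt_between'. lra. }
      pose proof (Hg2 a' b a b Ha' Hb Ha Hb) as Hl. pose proof (Hg2 a b' a b Ha Hb' Ha Hb) as Hr.
      rewrite <- (RInt_Chasles_cont g a' a b Hg) in Hl.
      rewrite <- (RInt_Chasles_cont g a b b' Hg) in Hr.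
      replace (RInt g a' a + RInt g a b - RInt g a b) with (RInt g a' a) in Hl by lra.
      replace (RInt g a b + RInt g b b' - RInt g a b) with (RInt g b b') in Hr by lra.
      pose proof (RInt_abs_le f g a' a Hf Hg Hfg). pose proof (RInt_abs_le f g b b' Hf Hg Hfg).
      pose proof (Rabs_triang (RInt f a' a) (RInt f b b')). lra.
  - exists I. apply RInt_cv_is_int_R; auto.
    intros eps Heps.
    destruct (filter_prod_infty _ (HI (ball I (mkposreal eps Heps)) (locally_ball _ _)))
      as [M HM].
    exists M. intros a b Ha Hb. exact (HM a b Ha Hb).
Qed.

Lemma is_int_R_abs_le f g I J :
  (forall x, continuous f x) -> (forall x, continuous g x) ->
  (forall x, Rabs (f x) <= g x) -> is_int_R f I -> is_int_R g J -> Rabs I <= Rabs J.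
Proof.
  intros Hf Hg Hfg HI HJ. apply Rnot_lt_le. intros Hlt.
  set (e := (Rabs I - Rabs J) / 3).
  destruct (is_int_R_RInt_cv f I HI e) as [M1 H1]; [unfold e; lra|].
  destruct (is_int_R_RInt_cv g J HJ e) as [M2 H2]; [unfold e; lra|].
  set (L := Rabs M1 + Rabs M2 + 1).
  pose proof (Rle_abs M1). pose proof (Rle_abs M2).
  pose proof (Rabs_pos M1). pose proof (Rabs_pos M2).
  specialize (H1 (- L) L ltac:(unfold L; lra) ltac:(unfold L; lra)).
  specialize (H2 (- L) L ltac:(unfold L; lra) ltac:(unfold L; lra)).
  pose proof (RInt_abs_le f g (- L) L Hf Hg Hfg).
  pose proof (Rabs_triang_inv I (RInt f (- L) L)).
  pose proof (Rabs_triang_inv (RInt g (- L) L) J).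
  rewrite Rabs_minus_sym in H1. unfold e in *. lra.
Qed.

Lemma is_int_R_shift f I s :
  (forall x, continuous f x) -> is_int_R f I -> is_int_R (fun x => f (x + s)) I.
Proof.
  intros Hc H. apply RInt_cv_is_int_R; [apply continuous_shift, Hc|].
  intros eps He. destruct (is_int_R_RInt_cv f I H eps He) as [M HM].
  exists (M + Rabs s). intros a b Ha Hb. rewrite RInt_shift by auto.
  pose proof (Rle_abs s). pose proof (Rle_abs (- s)). rewrite Rabs_Ropp in *.
  apply HM; lra.
Qed.

Lemma is_int_R_odd f I :
  (forall x, continuous f x) -> (forall x, f (- x) = - f x) -> is_int_R f I -> I = 0.
Proof.
  intros Hc Ho H. apply cond_eq. intros eps He.
  destruct (is_int_R_RInt_cv f I H eps He) as [M HM].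
  pose proof (Rle_abs M).
  specialize (HM (- (Rabs M + 1)) (Rabs M + 1) ltac:(lra) ltac:(lra)).
  rewrite RInt_odd in HM by auto. rewrite Rabs_minus_sym. exact HM.
Qed.

Lemma is_int_R_derive F f (la lb : R) :
  (forall x, is_derive F x (f x)) -> (forall x, continuous f x) ->
  is_lim F m_infty la -> is_lim F p_infty lb -> is_int_R f (lb - la).
Proof.
  intros HD Hc Ha Hb. apply RInt_cv_is_int_R; auto.
  intros eps He.
  apply is_lim_spec in Ha, Hb. unfold is_lim' in Ha, Hb.
  destruct (Ha (pos_div_2 (mkposreal eps He))) as [Ma HMa].
  destruct (Hb (pos_div_2 (mkposreal eps He))) as [Mb HMb]. simpl in *.
  exists (Rmax (- Ma) Mb). intros a b Hla Hlb.
  replace (RInt f a b) with (F b - F a).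
  2:{ symmetry. apply is_RInt_unique, (is_RInt_derive (V := R_CompleteNormedModule) F f);
      intros; [apply HD | apply Hc]. }
  specialize (HMa a ltac:(pose proof (Rmax_l (- Ma) Mb); lra)).
  specialize (HMb b ltac:(pose proof (Rmax_r (- Ma) Mb); lra)).
  apply Rabs_lt_between' in HMa, HMb. apply Rabs_lt_between'. lra.
Qed.

Lemma is_lim_p_infty_decay F (K : R) :
  (forall x, Rabs x * Rabs (F x) <= K) -> is_lim F p_infty 0.
Proof.
  intros HK. apply is_lim_spec. intros eps.
  exists (Rabs K / eps + 1). intros x Hx.
  assert (0 <= Rabs K / eps) by (apply Rdiv_le_0_compat; [apply Rabs_pos | apply cond_pos]).
  specialize (HK x). rewrite Rabs_right in HK by lra.
  rewrite Rminus_0_r. apply Rnot_le_lt. intros Hle.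
  assert (Hx' : Rabs K < x * eps).
  { apply (Rmult_lt_compat_r eps) in Hx; [|apply cond_pos].
    unfold Rdiv in Hx. rewrite Rmult_plus_distr_r, Rmult_assoc, Rinv_l, Rmult_1_r, Rmult_1_l in Hx
      by (apply Rgt_not_eq, cond_pos).
    pose proof (cond_pos eps). lra. }
  pose proof (Rle_abs K). pose proof (cond_pos eps). nra.
Qed.

Lemma is_lim_m_infty_decay F (K : R) :
  (forall x, Rabs x * Rabs (F x) <= K) -> is_lim F m_infty 0.
Proof.
  intros HK.
  apply (is_lim_ext (fun x => F (- - x))); [intros; rewrite Ropp_involutive; reflexivity|].
  apply (is_lim_comp (fun x => F (- x)) Ropp m_infty 0 p_infty).
  - apply (is_lim_p_infty_decay _ K). intros x. rewrite <- Rabs_Ropp. apply HK.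
  - apply (is_lim_opp (fun x => x) m_infty m_infty), is_lim_id.
  - exists 0. intros; discriminate.
Qed.

Lemma is_int_R_derive_decay F f (K : R) :
  (forall x, is_derive F x (f x)) -> (forall x, continuous f x) ->
  (forall x, Rabs x * Rabs (F x) <= K) -> is_int_R f 0.
Proof.
  intros HD Hc HK. replace 0 with (0 - 0) by ring.
  apply (is_int_R_derive F); auto.
  - apply (is_lim_m_infty_decay F K HK).
  - apply (is_lim_p_infty_decay F K HK).
Qed.

Lemma is_int_R_plus_derivative h F d (J K : R) :
  is_int_R h J -> (forall x, is_derive F x (d x)) -> (forall x, continuous d x) ->
  (forall x, Rabs x * Rabs (F x) <= K) -> is_int_R (fun x => h x + d x) J.
Proof.
  intros Hh HD Hd HK. rewrite <- (Rplus_0_r J).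
  apply is_int_R_plus; auto. apply (is_int_R_derive_decay F d K); auto.
Qed.

End ImproperIntegral.

Definition int_R (f : R -> R) : R := RInt_gen f (Rbar_locally m_infty) (Rbar_locally p_infty).

Lemma is_int_R_int_R (f : R -> R) : (exists I, is_int_R f I) -> is_int_R f (int_R f).
Proof. intros [I H]. unfold int_R. rewrite (is_RInt_gen_unique f I H). exact H. Qed.

Section PeriodicDifference.
Variables (w g : R -> R) (c K : R).
Hypotheses (w_cont : forall x, continuous w x) (g_cont : forall x, continuous g x)
  (w_per : forall x, w (x - c) = w x) (w_bound : forall x, Rabs (w x) <= 1)
  (g_decay : forall x, Rabs x * Rabs (g x) <= K).

Let wg x := w x * g x.

Let wg_cont : forall x, continuous wg x.
Proof. apply continuous_mult_fun; auto. Qed.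

Lemma RInt_periodic_difference L :
  RInt (fun x => w x * (g x - g (x - c))) (- L) L = RInt wg (L - c) L - RInt wg (- L - c) (- L).
Proof.
  replace (RInt (fun x => w x * (g x - g (x - c))) (- L) L)
    with (RInt wg (- L) L - RInt (fun x => wg (x + - c)) (- L) L).
  2:{ rewrite <- (RInt_minus (V := R_CompleteNormedModule));
      [| apply ex_RInt_of_continuous, wg_cont
       | apply ex_RInt_of_continuous, continuous_shift, wg_cont].
      apply RInt_ext. intros x _. unfold wg, minus, plus, opp; simpl.
      replace (x + - c) with (x - c) by ring. rewrite w_per. ring. }
  rewrite RInt_shift by apply wg_cont.
  rewrite <- (RInt_Chasles_cont wg (- L + - c) (- L) (L + - c) wg_cont).
  rewrite <- (RInt_Chasles_cont wg (- L) (L + - c) L wg_cont).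
  replace (L - c) with (L + - c) by ring. replace (- L - c) with (- L + - c) by ring. lra.
Qed.

Lemma RInt_periodic_tail u :
  2 * Rabs c < Rabs u -> Rabs (RInt wg (u - c) u) <= Rabs c * (2 * K / Rabs u).
Proof.
  intros Hu.
  assert (K0 : 0 <= K) by (specialize (g_decay 0); rewrite Rabs_R0 in g_decay; lra).
  pose proof (Rabs_pos c) as Hc0.
  replace (Rabs c) with (Rabs (u - (u - c))) by (f_equal; ring).
  apply RInt_abs_le_const; [apply wg_cont|]. intros t Ht.
  assert (Ht' : Rabs u / 2 <= Rabs t).
  { pose proof (Rabs_triang_inv u (u - t)) as Htri. replace (u - (u - t)) with t in Htri by ring.
    assert (Rabs (u - t) <= Rabs c).
    { unfold Rmin, Rmax in Ht. destruct Rle_dec; apply Rabs_le;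
      pose proof (Rle_abs c); pose proof (Rle_abs (- c)); rewrite Rabs_Ropp in *; lra. }
    lra. }
  unfold wg. rewrite Rabs_mult.
  apply Rle_trans with (1 * Rabs (g t)); [apply Rmult_le_compat_r; auto using Rabs_pos|].
  rewrite Rmult_1_l. specialize (g_decay t).
  apply Rmult_le_reg_l with (Rabs u / 2); [lra|].
  replace (Rabs u / 2 * (2 * K / Rabs u)) with K by (field; lra).
  apply Rle_trans with (Rabs t * Rabs (g t)); auto.
  apply Rmult_le_compat_r; auto using Rabs_pos.
Qed.

Lemma is_int_R_periodic_difference I :
  is_int_R (fun x => w x * (g x - g (x - c))) I -> I = 0.
Proof.
  intros HI.
  assert (K0 : 0 <= K) by (specialize (g_decay 0); rewrite Rabs_R0 in g_decay; lra).
  pose proof (Rabs_pos c) as Hc0.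
  apply cond_eq. intros eps He. rewrite Rminus_0_r.
  destruct (is_int_R_RInt_cv _ I HI (eps / 2)) as [M HM]; [lra|].
  set (L := Rabs M + 2 * Rabs c + 8 * Rabs c * K / eps + 1).
  assert (0 <= 8 * Rabs c * K / eps) by (apply Rdiv_le_0_compat; nra).
  pose proof (Rle_abs M). pose proof (Rabs_pos M).
  assert (HL : 0 < L) by (unfold L; lra).
  specialize (HM (- L) L ltac:(unfold L; lra) ltac:(unfold L; lra)).
  rewrite RInt_periodic_difference in HM.
  pose proof (RInt_periodic_tail L) as T1. pose proof (RInt_periodic_tail (- L)) as T2.
  rewrite Rabs_Ropp in T2. rewrite (Rabs_right L) in T1, T2 by lra.
  specialize (T1 ltac:(unfold L; lra)). specialize (T2 ltac:(unfold L; lra)).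
  assert (Small : Rabs c * (2 * K / L) <= eps / 4).
  { apply Rmult_le_reg_l with (4 * L / eps); [apply Rdiv_lt_0_compat; lra|].
    replace (4 * L / eps * (Rabs c * (2 * K / L))) with (8 * Rabs c * K / eps) by (field; lra).
    replace (4 * L / eps * (eps / 4)) with L by (field; lra). unfold L; lra. }
  set (X := RInt wg (L - c) L) in *. set (Y := RInt wg (- L - c) (- L)) in *.
  assert (Rabs (X - Y) <= Rabs X + Rabs Y)
    by (unfold Rminus; rewrite <- (Rabs_Ropp Y); apply Rabs_triang).
  pose proof (Rabs_triang_inv I (X - Y)). rewrite Rabs_minus_sym in HM. lra.
Qed.

End PeriodicDifference.

(** * Differentiation under the integral sign *)

Lemma derivable_pt_lim_of_quadratic_remainder (f : R -> R) (y l C delta : R) :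
  0 < delta ->
  (forall h, Rabs h <= delta -> Rabs (f (y + h) - f y - h * l) <= C * h ^ 2) ->
  derivable_pt_lim f y l.
Proof.
  intros Hd Hrem eps He.
  assert (C0 : 0 <= C).
  { specialize (Hrem delta ltac:(rewrite Rabs_right; lra)).
    pose proof (Rabs_pos (f (y + delta) - f y - delta * l)).
    assert (0 < delta ^ 2) by (apply pow_lt; lra). nra. }
  set (d := Rmin delta (eps / (C + 1))).
  assert (Hdpos : 0 < d) by (apply Rmin_pos; [lra | apply Rdiv_lt_0_compat; lra]).
  exists (mkposreal d Hdpos). intros h Hh0 Hh. simpl in Hh.
  pose proof (Rmin_l delta (eps / (C + 1))). pose proof (Rmin_r delta (eps / (C + 1))).
  specialize (Hrem h ltac:(unfold d in Hh; lra)).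
  assert (Hh' : 0 < Rabs h) by (apply Rabs_pos_lt; auto).
  replace ((f (y + h) - f y) / h - l) with ((f (y + h) - f y - h * l) / h) by (field; auto).
  unfold Rdiv. rewrite Rabs_mult, Rabs_inv.
  apply Rmult_lt_reg_r with (Rabs h); auto.
  rewrite Rmult_assoc, Rinv_l, Rmult_1_r by lra.
  replace (h ^ 2) with (Rabs h * Rabs h) in Hrem
    by (rewrite <- Rabs_mult, Rabs_right; [ring | apply Rle_ge; nra]).
  assert (Rabs h * (C + 1) < eps).
  { apply Rmult_lt_reg_r with (/ (C + 1)); [apply Rinv_0_lt_compat; lra|].
    rewrite Rmult_assoc, Rinv_r, Rmult_1_r by lra. unfold d, Rdiv in *. lra. }
  nra.
Qed.

Lemma taylor2_remainder_le (f f' f'' : R -> R) (y delta M : R) :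
  (forall s, Rabs (s - y) <= delta -> is_derive f s (f' s)) ->
  (forall s, Rabs (s - y) <= delta -> is_derive f' s (f'' s)) ->
  (forall s, Rabs (s - y) <= delta -> Rabs (f'' s) <= M) ->
  forall h, Rabs h <= delta -> Rabs (f (y + h) - f y - h * f' y) <= M * h ^ 2.
Proof.
  intros D1 D2 Bd h Hh.
  (* mean value inequality, applied to f - f' y and then to f' *)
  replace (f (y + h) - f y - h * f' y)
    with ((f (y + h) - (y + h) * f' y) - (f y - y * f' y)) by ring.
  replace (M * h ^ 2) with (Rabs h * M * Rabs (y + h - y))
    by (replace (y + h - y) with h by ring; rewrite <- pow2_abs; ring).
  apply (bounded_variation (fun t => f t - t * f' y) (fun t => f' t - f' y)).
  intros t Ht. replace (y + h - y) with h in Ht by ring. split.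
  - apply (is_derive_minus f (fun t => t * f' y)); [apply D1; lra|].
    auto_derive; auto; ring.
  - eapply Rle_trans.
    + apply (bounded_variation f' f'' M y t). intros u Hu. split; [apply D2 | apply Bd]; lra.
    + assert (0 <= M) by (eapply Rle_trans; [apply Rabs_pos | apply (Bd y)];
                          rewrite Rminus_diag, Rabs_R0; pose proof (Rabs_pos h); lra).
      rewrite Rmult_comm. apply Rmult_le_compat_r; auto.
Qed.

Lemma derivable_pt_lim_param_int (w : R -> R) (phi : R -> R -> R) (phi' B Phi : R -> R)
  (y delta Psi beta : R) :
  0 < delta -> (forall x, continuous w x) -> (forall x, Rabs (w x) <= 1) ->
  (forall s, Rabs (s - y) <= delta -> forall x, continuous (phi s) x) ->
  (forall x, continuous phi' x) -> (forall x, continuous B x) ->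
  (forall s, Rabs (s - y) <= delta -> is_int_R (fun x => w x * phi s x) (Phi s)) ->
  is_int_R (fun x => w x * phi' x) Psi -> is_int_R B beta ->
  (forall h x, Rabs h <= delta -> Rabs (phi (y + h) x - phi y x - h * phi' x) <= B x * h ^ 2) ->
  derivable_pt_lim Phi y Psi.
Proof.
  intros Hd Cw Bw Cphi Cphi' CB HPhi HPsi HB Hrem.
  apply derivable_pt_lim_of_quadratic_remainder with (C := Rabs beta) (delta := delta); auto.
  intros h Hh.
  assert (Hyh : Rabs (y + h - y) <= delta) by (replace (y + h - y) with h by ring; auto).
  assert (Hy : Rabs (y - y) <= delta) by (rewrite Rminus_diag, Rabs_R0; lra).
  set (r := fun x => w x * (phi (y + h) x - phi y x - h * phi' x)).
  assert (Ir : is_int_R r (Phi (y + h) - Phi y - h * Psi)).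
  { apply is_int_R_ext with (fun x => w x * phi (y + h) x - w x * phi y x - h * (w x * phi' x)).
    - intros x. unfold r. ring.
    - apply is_int_R_minus; [apply is_int_R_minus; auto | apply is_int_R_scal; auto]. }
  assert (Cr : forall x, continuous r x).
  { apply continuous_mult_fun; auto. intros x.
    apply (continuous_minus (fun x => phi (y + h) x - phi y x)).
    - apply (continuous_minus (phi (y + h)) (phi y)); auto.
    - apply (continuous_scal_r h phi'), Cphi'. }
  assert (Br : forall x, Rabs (r x) <= h ^ 2 * B x).
  { intros x. unfold r. rewrite Rabs_mult, Rmult_comm.
    apply Rle_trans with (B x * h ^ 2 * 1); [| lra].
    apply Rmult_le_compat; auto using Rabs_pos. }
  pose proof (is_int_R_abs_le r (fun x => h ^ 2 * B x) _ _ Cr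
                (continuous_mult_fun _ _ (fun x => continuous_const _ x) CB) Br Ir
                (is_int_R_scal _ _ _ HB)) as Hle.
  rewrite Rabs_mult, (Rabs_right (h ^ 2)) in Hle by (apply Rle_ge, pow2_ge_0).
  lra.
Qed.

Lemma derivative_zero_const_pos (u : R -> R) :
  (forall t, 0 < t -> derivable_pt_lim u t 0) -> forall a b, 0 < a -> 0 < b -> u a = u b.
Proof.
  intros H a b Ha Hb.
  destruct (Rtotal_order a b) as [Hab|[->|Hab]]; auto.
  - destruct (MVT_cor2 u (fun _ => 0) a b Hab) as [c [Hc _]]; [intros; apply H; lra | lra].
  - destruct (MVT_cor2 u (fun _ => 0) b a Hab) as [c [Hc _]]; [intros; apply H; lra | lra].
Qed.

(** * The Poisson kernel *)

(* [poisson s] omits the factor [/ PI] of the Poisson kernel of the paper: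
   [pk k x y = / PI * poisson (2 * PI * IZR k) y x]. *)
Definition sq_dist (s y x : R) : R := (x - s) ^ 2 + y ^ 2.
Definition poisson (s y x : R) : R := y / sq_dist s y x.
Definition poisson_dx (s y x : R) : R := - 2 * (x - s) * y / sq_dist s y x ^ 2.
Definition poisson_dy (s y x : R) : R := ((x - s) ^ 2 - y ^ 2) / sq_dist s y x ^ 2.
Definition poisson_dyy (y x : R) : R := 2 * y * (y ^ 2 - 3 * x ^ 2) / sq_dist 0 y x ^ 3.
Definition poisson_dyyy (y x : R) : R :=
  - 6 * (x ^ 4 - 6 * x ^ 2 * y ^ 2 + y ^ 4) / sq_dist 0 y x ^ 4.
Definition conj_poisson (s y x : R) : R := (x - s) / sq_dist s y x.

Lemma sq_dist_pos s y x : 0 < y -> 0 < sq_dist s y x.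
Proof.
  intros Hy. unfold sq_dist. pose proof (pow2_ge_0 (x - s)). pose proof (pow_lt y 2 Hy). lra.
Qed.

Ltac sq_dist_neq0 t :=
  repeat match goal with
  | |- _ /\ _ => split
  | |- True => exact I
  | |- _ * _ <> 0 => apply Rmult_integral_contrapositive_currified
  | |- _ <> 0 => apply Rgt_not_eq; pose proof (pow2_ge_0 t); nra
  end.

Ltac derive_kernel t := auto_derive; [sq_dist_neq0 t | field; sq_dist_neq0 t].

Ltac continuous_kernel t :=
  apply (ex_derive_continuous (V := R_NormedModule)); unfold sq_dist; auto_derive; sq_dist_neq0 t.

Section Kernels.
Variables (s y : R).
Hypothesis Hy : 0 < y.

Lemma continuous_poisson x : continuous (poisson s y) x.
Proof. unfold poisson; continuous_kernel (x - s). Qed.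
Lemma continuous_poisson_dx x : continuous (poisson_dx s y) x.
Proof. unfold poisson_dx; continuous_kernel (x - s). Qed.
Lemma continuous_poisson_dy x : continuous (poisson_dy s y) x.
Proof. unfold poisson_dy; continuous_kernel (x - s). Qed.
Lemma continuous_poisson_dyy x : continuous (poisson_dyy y) x.
Proof. unfold poisson_dyy; continuous_kernel (x - 0). Qed.
Lemma continuous_conj_poisson x : continuous (conj_poisson s y) x.
Proof. unfold conj_poisson; continuous_kernel (x - s). Qed.
Lemma continuous_inv_sq_dist x : continuous (fun x => / sq_dist s y x) x.
Proof. continuous_kernel (x - s). Qed.

Lemma is_derive_poisson x : is_derive (poisson s y) x (poisson_dx s y x).
Proof. unfold poisson, poisson_dx, sq_dist. derive_kernel (x - s). Qed.

Lemma is_derive_opp_conj_poisson x :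
  is_derive (fun x => - conj_poisson s y x) x (poisson_dy s y x).
Proof. unfold conj_poisson, poisson_dy, sq_dist. derive_kernel (x - s). Qed.

End Kernels.

Section KernelIntegrals.
Variable y : R.
Hypothesis Hy : 0 < y.

Lemma is_int_R_poisson0 : is_int_R (poisson 0 y) PI.
Proof.
  replace PI with (PI / 2 - - (PI / 2)) by field.
  apply (is_int_R_derive (fun x => atan (x / y))).
  - intros x. unfold poisson, sq_dist. auto_derive; auto.
    field. split; [sq_dist_neq0 x | lra].
  - apply continuous_poisson; auto.
  - apply is_lim_atan_div_m_infty; auto.
  - apply is_lim_atan_div_p_infty; auto.
Qed.

Lemma is_int_R_inv_sq_dist s : is_int_R (fun x => / sq_dist s y x) (PI / y).
Proof.
  apply (is_int_R_ext (fun x => / y * poisson 0 y (x + - s))).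
  { intros x. unfold poisson, sq_dist. replace (x + - s - 0) with (x - s) by ring.
    field. split; [sq_dist_neq0 (x - s) | lra]. }
  replace (PI / y) with (/ y * PI) by (unfold Rdiv; ring).
  apply is_int_R_scal, (is_int_R_shift (poisson 0 y)); [apply continuous_poisson; auto|].
  apply is_int_R_poisson0.
Qed.

Lemma is_int_R_poisson_dx0 : is_int_R (poisson_dx 0 y) 0.
Proof.
  apply (is_int_R_derive_decay (poisson 0 y) _ (1 / 2)).
  - apply is_derive_poisson; auto.
  - exact (continuous_poisson_dx 0 y Hy).
  - intros x. apply Rabs_mult_div_le; [apply sq_dist_pos; auto|].
    unfold sq_dist. pose proof (pow2_ge_0 (x - 0 - y)). pose proof (pow2_ge_0 (x - 0 + y)).
    apply Rabs_le. nra.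
Qed.

Lemma is_int_R_poisson_dy0 : is_int_R (poisson_dy 0 y) 0.
Proof.
  apply (is_int_R_derive_decay (fun x => - conj_poisson 0 y x) _ 1).
  - apply is_derive_opp_conj_poisson; auto.
  - exact (continuous_poisson_dy 0 y Hy).
  - intros x. rewrite Rabs_Ropp. apply Rabs_mult_div_le; [apply sq_dist_pos; auto|].
    unfold sq_dist. pose proof (pow2_ge_0 y). replace (x - 0) with x by ring.
    rewrite Rabs_right; nra.
Qed.

Lemma is_int_R_le_inv_sq_dist (f : R -> R) (K s : R) :
  (forall x, continuous f x) -> (forall x, Rabs (f x) <= K * / sq_dist s y x) ->
  exists I, is_int_R f I.
Proof.
  intros Hc Hb. apply (is_int_R_dominated f (fun x => K * / sq_dist s y x) (K * (PI / y))); auto.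
  - apply continuous_mult_fun; [intros; apply continuous_const|].
    apply continuous_inv_sq_dist; auto.
  - apply is_int_R_scal, is_int_R_inv_sq_dist.
Qed.

End KernelIntegrals.

Section KernelBounds.
Variables (s y : R).
Hypothesis Hy : 0 < y.

Lemma poisson_nonneg x : 0 <= poisson s y x.
Proof. unfold poisson. apply Rdiv_le_0_compat; [lra | apply sq_dist_pos; auto]. Qed.

Lemma poisson_le x : Rabs (poisson s y x) <= y * / sq_dist s y x.
Proof. rewrite Rabs_right by (apply Rle_ge, poisson_nonneg). unfold poisson. lra. Qed.

Lemma poisson_dx_le x : Rabs (poisson_dx s y x) <= 1 * / sq_dist s y x.
Proof.
  unfold poisson_dx. pose proof (sq_dist_pos s y x Hy).
  apply Rabs_div_le_inv; auto; [apply pow_lt; auto|].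
  assert (Rabs (-2 * (x - s) * y) <= sq_dist s y x).
  { unfold sq_dist. pose proof (pow2_ge_0 (x - s - y)). pose proof (pow2_ge_0 (x - s + y)).
    apply Rabs_le. nra. }
  nra.
Qed.

Lemma poisson_dy_le x : Rabs (poisson_dy s y x) <= 1 * / sq_dist s y x.
Proof.
  unfold poisson_dy. pose proof (sq_dist_pos s y x Hy).
  apply Rabs_div_le_inv; auto; [apply pow_lt; auto|].
  assert (Rabs ((x - s) ^ 2 - y ^ 2) <= sq_dist s y x).
  { unfold sq_dist. pose proof (pow2_ge_0 (x - s)). pose proof (pow2_ge_0 y). apply Rabs_le. lra. }
  nra.
Qed.

End KernelBounds.

Lemma inv_sq_dist_le_inv x t s : 0 < t <= s -> / sq_dist 0 s x <= / sq_dist 0 t x.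
Proof.
  intros Hts. apply Rinv_le_contravar; [apply sq_dist_pos; lra|].
  unfold sq_dist. nra.
Qed.

Lemma poisson_dyy_le y x : 0 < y -> Rabs (poisson_dyy y x) <= 6 / y * / sq_dist 0 y x.
Proof.
  intros Hy. unfold poisson_dyy. set (q := sq_dist 0 y x).
  assert (Hq : 0 < q) by (apply sq_dist_pos; auto).
  apply Rabs_div_le_inv; auto; [apply pow_lt; auto|].
  assert (HN : Rabs (2 * y * (y ^ 2 - 3 * x ^ 2)) <= 6 * y * q).
  { apply Rabs_le. unfold q, sq_dist. pose proof (pow2_ge_0 (x - 0)). nra. }
  assert (Hyq : y ^ 2 <= q) by (unfold q, sq_dist; pose proof (pow2_ge_0 (x - 0)); lra).
  apply Rmult_le_reg_l with y; auto.
  replace (y * (6 / y * q ^ 3)) with ((6 * q ^ 2) * q) by (field; lra).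
  set (N := Rabs (2 * y * (y ^ 2 - 3 * x ^ 2))) in *.
  replace (y * (N * q)) with ((y * q) * N) by ring.
  apply Rle_trans with ((y * q) * (6 * y * q)); [apply Rmult_le_compat_l; nra|].
  replace (y * q * (6 * y * q)) with ((6 * q ^ 2) * y ^ 2) by ring.
  apply Rmult_le_compat_l; nra.
Qed.

Lemma poisson_dyyy_le y x : 0 < y -> Rabs (poisson_dyyy y x) <= 18 / y ^ 2 * / sq_dist 0 y x.
Proof.
  intros Hy. unfold poisson_dyyy. set (q := sq_dist 0 y x).
  assert (Hq : 0 < q) by (apply sq_dist_pos; auto).
  assert (Hy2 : 0 < y ^ 2) by (apply pow_lt; auto).
  apply Rabs_div_le_inv; auto; [apply pow_lt; auto|].
  assert (HN : Rabs (-6 * (x ^ 4 - 6 * x ^ 2 * y ^ 2 + y ^ 4)) <= 18 * q ^ 2).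
  { apply Rabs_le. unfold q, sq_dist. pose proof (pow2_ge_0 x). pose proof (pow2_ge_0 y).
    pose proof (pow2_ge_0 (x ^ 2 - y ^ 2)). replace (x - 0) with x by ring. nra. }
  assert (Hyq : y ^ 2 <= q) by (unfold q, sq_dist; pose proof (pow2_ge_0 (x - 0)); lra).
  apply Rmult_le_reg_l with (y ^ 2); auto.
  replace (y ^ 2 * (18 / y ^ 2 * q ^ 4)) with ((18 * q ^ 3) * q) by (field; lra).
  set (N := Rabs (-6 * (x ^ 4 - 6 * x ^ 2 * y ^ 2 + y ^ 4))) in *.
  replace (y ^ 2 * (N * q)) with ((y ^ 2 * q) * N) by ring.
  apply Rle_trans with ((y ^ 2 * q) * (18 * q ^ 2)); [apply Rmult_le_compat_l; nra|].
  replace (y ^ 2 * q * (18 * q ^ 2)) with ((18 * q ^ 3) * y ^ 2) by ring.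
  apply Rmult_le_compat_l; [apply Rmult_le_pos; [lra | apply pow_le; lra] | lra].
Qed.

Section KernelsInY.
Variables (x s : R).
Hypothesis Hs : 0 < s.

Lemma is_derive_poisson_y : is_derive (fun s => poisson 0 s x) s (poisson_dy 0 s x).
Proof. unfold poisson, poisson_dy, sq_dist. derive_kernel (x - 0). Qed.

Lemma is_derive_poisson_dy_y : is_derive (fun s => poisson_dy 0 s x) s (poisson_dyy s x).
Proof. unfold poisson_dyy, poisson_dy, sq_dist. derive_kernel (x - 0). Qed.

Lemma is_derive_poisson_dyy_y : is_derive (fun s => poisson_dyy s x) s (poisson_dyyy s x).
Proof. unfold poisson_dyyy, poisson_dyy, sq_dist. derive_kernel (x - 0). Qed.

End KernelsInY.

Section NearY.
Variables (y s x : R).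
Hypotheses (Hy : 0 < y) (Hsy : Rabs (s - y) <= y / 2).

Lemma half_le_of_near : y / 2 <= s.
Proof. apply Rabs_le_between' in Hsy. lra. Qed.

Lemma poisson_dyy_le_near : Rabs (poisson_dyy s x) <= 12 / y * / sq_dist 0 (y / 2) x.
Proof.
  pose proof half_le_of_near.
  eapply Rle_trans; [apply poisson_dyy_le; lra|].
  apply Rmult_le_compat.
  - apply Rdiv_le_0_compat; lra.
  - apply Rlt_le, Rinv_0_lt_compat, sq_dist_pos; lra.
  - apply Rmult_le_reg_r with (s * y); [nra|].
    replace (6 / s * (s * y)) with (6 * y) by (field; lra).
    replace (12 / y * (s * y)) with (12 * s) by (field; lra). lra.
  - apply inv_sq_dist_le_inv; lra.
Qed.

Lemma poisson_dyyy_le_near : Rabs (poisson_dyyy s x) <= 72 / y ^ 2 * / sq_dist 0 (y / 2) x.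
Proof.
  pose proof half_le_of_near.
  eapply Rle_trans; [apply poisson_dyyy_le; lra|].
  apply Rmult_le_compat.
  - apply Rdiv_le_0_compat; [lra | apply pow_lt; lra].
  - apply Rlt_le, Rinv_0_lt_compat, sq_dist_pos; lra.
  - apply Rmult_le_reg_r with (s ^ 2 * y ^ 2); [apply Rmult_lt_0_compat; apply pow_lt; lra|].
    replace (18 / s ^ 2 * (s ^ 2 * y ^ 2)) with (18 * y ^ 2) by (field; lra).
    replace (72 / y ^ 2 * (s ^ 2 * y ^ 2)) with (72 * s ^ 2) by (field; lra). nra.
  - apply inv_sq_dist_le_inv; lra.
Qed.

End NearY.

(** * Fourier transform of the Poisson kernel *)

Definition cos_poisson (y : R) : R := int_R (fun x => cos x * poisson 0 y x).
Definition cos_poisson_dy (y : R) : R := int_R (fun x => cos x * poisson_dy 0 y x).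
Definition cos_poisson_dyy (y : R) : R := int_R (fun x => cos x * poisson_dyy y x).

Section CosPoisson.
Variable y : R.
Hypothesis Hy : 0 < y.

Lemma is_int_R_cos_poisson : is_int_R (fun x => cos x * poisson 0 y x) (cos_poisson y).
Proof.
  apply is_int_R_int_R, (is_int_R_le_inv_sq_dist y Hy _ y 0).
  - apply continuous_mult_fun; [apply continuous_cos | apply continuous_poisson; auto].
  - intros x. eapply Rle_trans; [apply Rabs_cos_mult_le | apply poisson_le; auto].
Qed.

Lemma is_int_R_cos_poisson_dy : is_int_R (fun x => cos x * poisson_dy 0 y x) (cos_poisson_dy y).
Proof.
  apply is_int_R_int_R, (is_int_R_le_inv_sq_dist y Hy _ 1 0).
  - apply continuous_mult_fun; [apply continuous_cos | apply continuous_poisson_dy; auto].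
  - intros x. eapply Rle_trans; [apply Rabs_cos_mult_le | apply poisson_dy_le; auto].
Qed.

Lemma is_int_R_cos_poisson_dyy : is_int_R (fun x => cos x * poisson_dyy y x) (cos_poisson_dyy y).
Proof.
  apply is_int_R_int_R, (is_int_R_le_inv_sq_dist y Hy _ (6 / y) 0).
  - apply continuous_mult_fun; [apply continuous_cos | apply continuous_poisson_dyy; auto].
  - intros x. eapply Rle_trans; [apply Rabs_cos_mult_le | apply poisson_dyy_le; auto].
Qed.

(* [poisson] is harmonic, so [poisson_dyy = - d^2/dx^2 poisson]: integrate by parts twice *)
Lemma cos_poisson_dyy_eq : cos_poisson_dyy y = cos_poisson y.
Proof.
  apply (is_int_R_unique (fun x => cos x * poisson_dyy y x)); [apply is_int_R_cos_poisson_dyy|].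
  apply (is_int_R_ext (fun x => cos x * poisson 0 y x
                         + (cos x * poisson_dyy y x - cos x * poisson 0 y x))); [intros; ring|].
  apply (is_int_R_plus_derivative _ (fun x => - cos x * poisson_dx 0 y x - sin x * poisson 0 y x)
           _ _ (2 / y + 1 / 2)).
  - apply is_int_R_cos_poisson.
  - intros x. unfold poisson, poisson_dx, poisson_dyy, sq_dist.
    derive_kernel (x - 0).
  - intros x. apply (continuous_minus (fun x => cos x * poisson_dyy y x));
      apply continuous_mult_fun;
      auto using continuous_cos, continuous_poisson_dyy, continuous_poisson.
  - intros x. pose proof (sq_dist_pos 0 y x Hy).
    assert (Hdx : Rabs x * Rabs (poisson_dx 0 y x) <= 2 / y).
    { unfold poisson_dx. apply Rabs_mult_div_le; [apply pow_lt; auto|].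
      replace (x * (-2 * (x - 0) * y)) with (- (2 * x ^ 2 * y)) by ring.
      rewrite Rabs_Ropp, Rabs_right by (apply Rle_ge; pose proof (pow2_ge_0 x); nra).
      apply Rmult_le_reg_l with y; auto.
      replace (y * (2 / y * sq_dist 0 y x ^ 2)) with (2 * sq_dist 0 y x ^ 2) by (field; lra).
      unfold sq_dist. replace (x - 0) with x by ring.
      pose proof (pow2_ge_0 x). pose proof (pow2_ge_0 y). nra. }
    assert (Hp : Rabs x * Rabs (poisson 0 y x) <= 1 / 2).
    { unfold poisson. apply Rabs_mult_div_le; auto.
      unfold sq_dist. pose proof (pow2_ge_0 (x - 0 - y)). pose proof (pow2_ge_0 (x - 0 + y)).
      apply Rabs_le. nra. }
    apply Rle_trans with (Rabs x * (Rabs (poisson_dx 0 y x) + Rabs (poisson 0 y x))); [|nra].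
    apply Rmult_le_compat_l; [apply Rabs_pos|].
    replace (- cos x * poisson_dx 0 y x - sin x * poisson 0 y x)
      with (- (cos x * poisson_dx 0 y x) + - (sin x * poisson 0 y x)) by ring.
    eapply Rle_trans; [apply Rabs_triang|]. rewrite !Rabs_Ropp.
    pose proof (Rabs_cos_mult_le x (poisson_dx 0 y x)).
    pose proof (Rabs_sin_mult_le x (poisson 0 y x)).
    lra.
Qed.

End CosPoisson.

Lemma derivable_pt_lim_cos_poisson y :
  0 < y -> derivable_pt_lim cos_poisson y (cos_poisson_dy y).
Proof.
  intros Hy.
  assert (Hpos : forall s, Rabs (s - y) <= y / 2 -> 0 < s)
    by (intros s Hs; pose proof (half_le_of_near y s Hs); lra).
  apply (derivable_pt_lim_param_int cos (fun s x => poisson 0 s x) (poisson_dy 0 y)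
           (fun x => 12 / y * / sq_dist 0 (y / 2) x) cos_poisson y (y / 2) _
           (12 / y * (PI / (y / 2)))).
  - lra.
  - apply continuous_cos.
  - intros x. apply Rabs_le, COS_bound.
  - intros s Hs. apply continuous_poisson; auto.
  - apply continuous_poisson_dy; auto.
  - apply continuous_mult_fun; [intros; apply continuous_const | apply continuous_inv_sq_dist; lra].
  - intros s Hs. apply is_int_R_cos_poisson; auto.
  - apply is_int_R_cos_poisson_dy; auto.
  - apply is_int_R_scal, is_int_R_inv_sq_dist; lra.
  - intros h x Hh.
    apply (taylor2_remainder_le (fun s => poisson 0 s x) (fun s => poisson_dy 0 s x)
             (fun s => poisson_dyy s x) y (y / 2)); auto.
    + intros s Hs. apply is_derive_poisson_y; auto.
    + intros s Hs. apply is_derive_poisson_dy_y; auto.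
    + intros s Hs. apply poisson_dyy_le_near; auto.
Qed.

Lemma derivable_pt_lim_cos_poisson_dy y :
  0 < y -> derivable_pt_lim cos_poisson_dy y (cos_poisson y).
Proof.
  intros Hy. rewrite <- cos_poisson_dyy_eq by auto.
  assert (Hpos : forall s, Rabs (s - y) <= y / 2 -> 0 < s)
    by (intros s Hs; pose proof (half_le_of_near y s Hs); lra).
  apply (derivable_pt_lim_param_int cos (fun s x => poisson_dy 0 s x) (poisson_dyy y)
           (fun x => 72 / y ^ 2 * / sq_dist 0 (y / 2) x) cos_poisson_dy y (y / 2) _
           (72 / y ^ 2 * (PI / (y / 2)))).
  - lra.
  - apply continuous_cos.
  - intros x. apply Rabs_le, COS_bound.
  - intros s Hs. apply continuous_poisson_dy; auto.
  - apply continuous_poisson_dyy; auto.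
  - apply continuous_mult_fun; [intros; apply continuous_const | apply continuous_inv_sq_dist; lra].
  - intros s Hs. apply is_int_R_cos_poisson_dy; auto.
  - apply is_int_R_cos_poisson_dyy; auto.
  - apply is_int_R_scal, is_int_R_inv_sq_dist; lra.
  - intros h x Hh.
    apply (taylor2_remainder_le (fun s => poisson_dy 0 s x) (fun s => poisson_dyy s x)
             (fun s => poisson_dyyy s x) y (y / 2)); auto.
    + intros s Hs. apply is_derive_poisson_dy_y; auto.
    + intros s Hs. apply is_derive_poisson_dyy_y; auto.
    + intros s Hs. apply poisson_dyyy_le_near; auto.
Qed.

Section CosPoissonBounds.
Variable y : R.
Hypothesis Hy : 0 < y.

Lemma cos_poisson_le : Rabs (cos_poisson y) <= PI.
Proof.
  pose proof PI_RGT_0.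
  rewrite <- (Rabs_right PI) by lra.
  apply (is_int_R_abs_le (fun x => cos x * poisson 0 y x) (poisson 0 y)).
  - apply continuous_mult_fun; [apply continuous_cos | apply continuous_poisson; auto].
  - apply continuous_poisson; auto.
  - intros x. eapply Rle_trans; [apply Rabs_cos_mult_le|].
    rewrite Rabs_right by (apply Rle_ge, poisson_nonneg; auto). lra.
  - apply is_int_R_cos_poisson; auto.
  - apply is_int_R_poisson0; auto.
Qed.

Lemma cos_poisson_dy_le : Rabs (cos_poisson_dy y) <= PI / y.
Proof.
  assert (0 < PI / y) by (apply Rdiv_lt_0_compat; [apply PI_RGT_0 | auto]).
  rewrite <- (Rabs_right (PI / y)) by lra.
  apply (is_int_R_abs_le (fun x => cos x * poisson_dy 0 y x) (fun x => / sq_dist 0 y x)).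
  - apply continuous_mult_fun; [apply continuous_cos | apply continuous_poisson_dy; auto].
  - apply continuous_inv_sq_dist; auto.
  - intros x. eapply Rle_trans; [apply Rabs_cos_mult_le|].
    rewrite <- (Rmult_1_l (/ sq_dist 0 y x)). apply poisson_dy_le; auto.
  - apply is_int_R_cos_poisson_dy; auto.
  - apply is_int_R_inv_sq_dist; auto.
Qed.

Lemma cos_poisson_near_pi : Rabs (cos_poisson y - PI) <= 4 * PI * y.
Proof.
  pose proof PI_RGT_0.
  replace (4 * PI * y) with (Rabs (4 * y * (PI / 1)))
    by (rewrite Rabs_right; [field | apply Rle_ge; unfold Rdiv; rewrite Rinv_1; nra]).
  apply (is_int_R_abs_le (fun x => cos x * poisson 0 y x - poisson 0 y x)
           (fun x => 4 * y * / sq_dist 0 1 x)).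
  - intros x. apply (continuous_minus (fun x => cos x * poisson 0 y x) (poisson 0 y));
      [apply continuous_mult_fun; [apply continuous_cos|] |]; apply continuous_poisson; auto.
  - apply continuous_mult_fun; [intros; apply continuous_const | apply continuous_inv_sq_dist; lra].
  - intros x. destruct (one_minus_cos_le x) as [C1 C2].
    pose proof (poisson_nonneg 0 y Hy x).
    replace (cos x * poisson 0 y x - poisson 0 y x) with (- ((1 - cos x) * poisson 0 y x)) by ring.
    rewrite Rabs_Ropp, Rabs_right by (apply Rle_ge, Rmult_le_pos; auto).
    pose proof (sq_dist_pos 0 y x Hy). pose proof (sq_dist_pos 0 1 x Rlt_0_1).
    unfold poisson, sq_dist in *. replace (x - 0) with x in * by ring.
    apply Rmult_le_reg_r with ((1 + x ^ 2) * (x ^ 2 + y ^ 2)); [nra|].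
    replace ((1 - cos x) * (y / (x ^ 2 + y ^ 2)) * ((1 + x ^ 2) * (x ^ 2 + y ^ 2)))
      with (y * ((1 - cos x) * (1 + x ^ 2))) by (field; lra).
    replace (4 * y * / (x ^ 2 + 1 ^ 2) * ((1 + x ^ 2) * (x ^ 2 + y ^ 2)))
      with (4 * y * (x ^ 2 + y ^ 2)) by (field; lra).
    assert ((1 - cos x) * (1 + x ^ 2) <= 4 * x ^ 2).
    { apply Rmult_le_reg_r with (/ (1 + x ^ 2)); [apply Rinv_0_lt_compat; lra|].
      replace ((1 - cos x) * (1 + x ^ 2) * / (1 + x ^ 2)) with (1 - cos x) by (field; lra). lra. }
    pose proof (pow2_ge_0 y). nra.
  - apply is_int_R_minus; [apply is_int_R_cos_poisson | apply is_int_R_poisson0]; auto.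
  - apply is_int_R_scal, is_int_R_inv_sq_dist; lra.
Qed.

End CosPoissonBounds.

Lemma cos_poisson_add_dy_le z : 1 <= z -> Rabs (cos_poisson z + cos_poisson_dy z) <= 2 * PI.
Proof.
  intros Hz. pose proof PI_RGT_0.
  pose proof (cos_poisson_le z ltac:(lra)). pose proof (cos_poisson_dy_le z ltac:(lra)).
  assert (PI / z <= PI).
  { apply Rmult_le_reg_r with z; [lra|]. unfold Rdiv. rewrite Rmult_assoc, Rinv_l by lra. nra. }
  pose proof (Rabs_triang (cos_poisson z) (cos_poisson_dy z)). lra.
Qed.

(* [cos_poisson] solves [F'' = F] on [(0, +oo)], is bounded, and tends to [PI] at [0] *)
Lemma cos_poisson_dy_opp y : 0 < y -> cos_poisson_dy y = - cos_poisson y.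
Proof.
  intros Hy.
  set (u := fun t => (cos_poisson t + cos_poisson_dy t) * exp (- t)).
  assert (Du : forall t, 0 < t -> derivable_pt_lim u t 0).
  { intros t Ht.
    assert (Dexp : derivable_pt_lim (fun t => exp (- t)) t (- exp (- t)))
      by (apply is_derive_Reals; auto_derive; auto; ring).
    pose proof (derivable_pt_lim_mult _ _ t _ _
                  (derivable_pt_lim_plus _ _ t _ _ (derivable_pt_lim_cos_poisson t Ht)
                     (derivable_pt_lim_cos_poisson_dy t Ht)) Dexp) as D.
    replace 0 with ((cos_poisson_dy t + cos_poisson t) * exp (- t)
                    + (cos_poisson t + cos_poisson_dy t) * - exp (- t)) by ring.
    exact D. }
  assert (Hu : u y = 0).
  { apply cond_eq. intros eps He. rewrite Rminus_0_r.
    pose proof PI_RGT_0.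
    set (z := 1 + 2 * PI / eps).
    assert (Hz : 2 * PI / eps < z) by (unfold z; lra).
    assert (Hz0 : 1 <= z) by (unfold z; pose proof (Rdiv_lt_0_compat (2 * PI) eps); lra).
    rewrite (derivative_zero_const_pos u Du y z) by lra.
    unfold u. rewrite Rabs_mult, (Rabs_right (exp (- z))) by (apply Rle_ge, Rlt_le, exp_pos).
    pose proof (cos_poisson_add_dy_le z Hz0) as Hsum. pose proof (exp_neg_mult_lt z) as Hexp.
    assert (Heps : 2 * PI < eps * z).
    { apply Rmult_lt_reg_l with (/ eps); [apply Rinv_0_lt_compat; lra|].
      replace (/ eps * (eps * z)) with z by (field; lra). unfold Rdiv in Hz. lra. }
    pose proof (exp_pos (- z)).
    apply Rle_lt_trans with (2 * PI * exp (- z)); [apply Rmult_le_compat_r; lra|].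
    apply Rmult_lt_reg_r with z; [lra|]. nra. }
  unfold u in Hu. apply Rmult_integral in Hu. destruct Hu as [Hu|Hu]; [lra|].
  pose proof (exp_pos (- y)). lra.
Qed.

Lemma cos_poisson_eq y : 0 < y -> cos_poisson y = PI * exp (- y).
Proof.
  intros Hy.
  set (v := fun t => cos_poisson t * exp t).
  assert (Dv : forall t, 0 < t -> derivable_pt_lim v t 0).
  { intros t Ht.
    pose proof (derivable_pt_lim_mult _ _ t _ _ (derivable_pt_lim_cos_poisson t Ht)
                  (derivable_pt_lim_exp t)) as D.
    replace 0 with (cos_poisson_dy t * exp t + cos_poisson t * exp t)
      by (rewrite cos_poisson_dy_opp by auto; ring).
    exact D. }
  set (K := v 1).
  assert (HK : forall t, 0 < t -> cos_poisson t = K * exp (- t)).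
  { intros t Ht. unfold K. rewrite (derivative_zero_const_pos v Dv 1 t) by lra. unfold v.
    rewrite Rmult_assoc, <- exp_plus, Rplus_opp_r, exp_0. ring. }
  assert (KP : K = PI).
  { apply cond_eq. intros eps He.
    pose proof PI_RGT_0. pose proof (Rabs_pos K).
    set (z := eps / (2 * (Rabs K + 4 * PI))).
    assert (Hz : 0 < z) by (apply Rdiv_lt_0_compat; lra).
    pose proof (cos_poisson_near_pi z Hz) as Hnear. rewrite HK in Hnear by auto.
    assert (E1 : 1 - z <= exp (- z)) by (pose proof (exp_ineq1_le (- z)); lra).
    assert (E2 : exp (- z) <= 1) by (rewrite <- exp_0; apply Rlt_le, exp_increasing; lra).
    assert (Hdist : Rabs (K - PI) <= Rabs K * z + 4 * PI * z).
    { replace (K - PI) with (K * (1 - exp (- z)) + (K * exp (- z) - PI)) by ring.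
      eapply Rle_trans; [apply Rabs_triang|]. rewrite Rabs_mult.
      rewrite (Rabs_right (1 - exp (- z))) by lra.
      apply Rplus_le_compat; auto. apply Rmult_le_compat_l; lra. }
    assert ((Rabs K + 4 * PI) * z = eps / 2) by (unfold z; field; lra).
    lra. }
  rewrite HK, KP by auto. reflexivity.
Qed.

Section WeightedKernelIntegrals.
Variable y : R.
Hypothesis Hy : 0 < y.

Lemma is_int_R_odd_le_inv_sq_dist (f : R -> R) (K : R) :
  (forall x, continuous f x) -> (forall x, f (- x) = - f x) ->
  (forall x, Rabs (f x) <= K * / sq_dist 0 y x) -> is_int_R f 0.
Proof.
  intros Hc Ho Hb. destruct (is_int_R_le_inv_sq_dist y Hy f K 0 Hc Hb) as [I HI].
  rewrite <- (is_int_R_odd f I); auto.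
Qed.

Lemma is_int_R_cos_poisson0 : is_int_R (fun x => cos x * poisson 0 y x) (PI * exp (- y)).
Proof. rewrite <- cos_poisson_eq by auto. apply is_int_R_cos_poisson; auto. Qed.

Lemma is_int_R_cos_poisson_dy0 :
  is_int_R (fun x => cos x * poisson_dy 0 y x) (- (PI * exp (- y))).
Proof.
  rewrite <- cos_poisson_eq, <- cos_poisson_dy_opp by auto.
  apply is_int_R_cos_poisson_dy; auto.
Qed.

Lemma is_int_R_cos_poisson_dx0 : is_int_R (fun x => cos x * poisson_dx 0 y x) 0.
Proof.
  apply (is_int_R_odd_le_inv_sq_dist _ 1).
  - apply continuous_mult_fun; [apply continuous_cos | apply continuous_poisson_dx; auto].
  - intros x. rewrite cos_neg. unfold poisson_dx, sq_dist.
    replace ((- x - 0) ^ 2) with ((x - 0) ^ 2) by ring. unfold Rdiv. ring.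
  - intros x. eapply Rle_trans; [apply Rabs_cos_mult_le | apply poisson_dx_le; auto].
Qed.

Lemma is_int_R_sin_poisson0 : is_int_R (fun x => sin x * poisson 0 y x) 0.
Proof.
  apply (is_int_R_odd_le_inv_sq_dist _ y).
  - apply continuous_mult_fun; [apply continuous_sin | apply continuous_poisson; auto].
  - intros x. rewrite sin_neg. unfold poisson, sq_dist.
    replace ((- x - 0) ^ 2) with ((x - 0) ^ 2) by ring. unfold Rdiv. ring.
  - intros x. eapply Rle_trans; [apply Rabs_sin_mult_le | apply poisson_le; auto].
Qed.

Lemma is_int_R_sin_poisson_dy0 : is_int_R (fun x => sin x * poisson_dy 0 y x) 0.
Proof.
  apply (is_int_R_odd_le_inv_sq_dist _ 1).
  - apply continuous_mult_fun; [apply continuous_sin | apply continuous_poisson_dy; auto].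
  - intros x. rewrite sin_neg. unfold poisson_dy, sq_dist.
    replace ((- x - 0) ^ 2) with ((x - 0) ^ 2) by ring. unfold Rdiv. ring.
  - intros x. eapply Rle_trans; [apply Rabs_sin_mult_le | apply poisson_dy_le; auto].
Qed.

Lemma is_int_R_sin_poisson_dx0 :
  is_int_R (fun x => sin x * poisson_dx 0 y x) (- (PI * exp (- y))).
Proof.
  apply (is_int_R_ext (fun x => - (cos x * poisson 0 y x)
                         + (sin x * poisson_dx 0 y x + cos x * poisson 0 y x))); [intros; ring|].
  apply (is_int_R_plus_derivative _ (fun x => sin x * poisson 0 y x) _ _ (1 / 2)).
  - apply (is_int_R_ext (fun x => -1 * (cos x * poisson 0 y x))); [intros; ring|].
    replace (- (PI * exp (- y))) with (-1 * (PI * exp (- y))) by ring.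
    apply is_int_R_scal, is_int_R_cos_poisson0.
  - intros x. unfold poisson, poisson_dx, sq_dist.
    derive_kernel (x - 0).
  - intros x. apply (continuous_plus (fun x => sin x * poisson_dx 0 y x));
      apply continuous_mult_fun;
      auto using continuous_sin, continuous_cos, continuous_poisson, continuous_poisson_dx.
  - intros x. eapply Rle_trans;
      [apply Rmult_le_compat_l; [apply Rabs_pos | apply Rabs_sin_mult_le]|].
    unfold poisson. apply Rabs_mult_div_le; [apply sq_dist_pos; auto|].
    unfold sq_dist. pose proof (pow2_ge_0 (x - 0 - y)). pose proof (pow2_ge_0 (x - 0 + y)).
    apply Rabs_le. nra.
Qed.

End WeightedKernelIntegrals.

(** * Kernels centred at 0 and at 2 pi n *)

Definition poisson_comb (a b d s y x : R) : R :=
  a * poisson s y x + b * poisson_dx s y x + d * poisson_dy s y x.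

Lemma continuous_poisson_comb a b d s y x : 0 < y -> continuous (poisson_comb a b d s y) x.
Proof.
  intros Hy. unfold poisson_comb, poisson, poisson_dx, poisson_dy. continuous_kernel (x - s).
Qed.

Definition two_center_comb (c y a b d a' b' d' e x : R) : R :=
  poisson_comb a b d 0 y x + poisson_comb a' b' d' c y x
  + e * (conj_poisson 0 y x - conj_poisson c y x).

Lemma conj_poisson_diff_le c y x : 0 < y ->
  Rabs (conj_poisson 0 y x - conj_poisson c y x)
  <= Rabs c * / sq_dist 0 y x + Rabs c * / sq_dist c y x.
Proof.
  intros Hy. unfold conj_poisson.
  pose proof (sq_dist_pos 0 y x Hy) as Q0. pose proof (sq_dist_pos c y x Hy) as Qc.
  replace ((x - 0) / sq_dist 0 y x - (x - c) / sq_dist c y x)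
    with (c * (y ^ 2 - x * (x - c)) / (sq_dist 0 y x * sq_dist c y x))
    by (unfold sq_dist in *; field; lra).
  replace (Rabs c * / sq_dist 0 y x + Rabs c * / sq_dist c y x)
    with (Rabs c * (sq_dist 0 y x + sq_dist c y x) * / (sq_dist 0 y x * sq_dist c y x))
    by (field; lra).
  apply Rabs_div_le_inv; [nra | nra|].
  apply Rmult_le_compat_r; [nra|].
  rewrite Rabs_mult. apply Rmult_le_compat_l; [apply Rabs_pos|].
  unfold sq_dist. pose proof (pow2_ge_0 (x + (x - c))). pose proof (pow2_ge_0 (x - (x - c))).
  pose proof (pow2_ge_0 y). apply Rabs_le. replace (x - 0) with x by ring. nra.
Qed.

Section Weighted.
Variables (w : R -> R) (c y m0 mx my : R).
Hypotheses (Hy : 0 < y) (w_cont : forall x, continuous w x) (w_bound : forall x, Rabs (w x) <= 1)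
  (w_per : forall x, w (x - c) = w x)
  (w_m0 : is_int_R (fun x => w x * poisson 0 y x) m0)
  (w_mx : is_int_R (fun x => w x * poisson_dx 0 y x) mx)
  (w_my : is_int_R (fun x => w x * poisson_dy 0 y x) my).

Lemma is_int_R_weighted_poisson_comb0 a b d :
  is_int_R (fun x => w x * poisson_comb a b d 0 y x) (a * m0 + b * mx + d * my).
Proof.
  apply (is_int_R_ext (fun x => a * (w x * poisson 0 y x) + b * (w x * poisson_dx 0 y x)
                                + d * (w x * poisson_dy 0 y x))).
  { intros x. unfold poisson_comb. ring. }
  apply is_int_R_plus; [apply is_int_R_plus|]; apply is_int_R_scal; auto.
Qed.

Lemma is_int_R_weighted_poisson_comb_shift a b d :
  is_int_R (fun x => w x * poisson_comb a b d c y x) (a * m0 + b * mx + d * my).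
Proof.
  apply (is_int_R_ext (fun x => w (x + - c) * poisson_comb a b d 0 y (x + - c))).
  { intros x. replace (x + - c) with (x - c) by ring. rewrite w_per.
    unfold poisson_comb, poisson, poisson_dx, poisson_dy, sq_dist.
    replace (x - c - 0) with (x - c) by ring. reflexivity. }
  apply (is_int_R_shift (fun x => w x * poisson_comb a b d 0 y x)).
  - apply continuous_mult_fun; auto. intros x. apply continuous_poisson_comb; auto.
  - apply is_int_R_weighted_poisson_comb0.
Qed.

Lemma is_int_R_weighted_conj_poisson_diff :
  is_int_R (fun x => w x * (conj_poisson 0 y x - conj_poisson c y x)) 0.
Proof.
  set (f := fun x => w x * (conj_poisson 0 y x - conj_poisson c y x)).
  assert (Cf : forall x, continuous f x).
  { apply continuous_mult_fun; auto. intros x.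
    apply (continuous_minus (conj_poisson 0 y)); apply continuous_conj_poisson; auto. }
  destruct (is_int_R_dominated f
              (fun x => Rabs c * / sq_dist 0 y x + Rabs c * / sq_dist c y x)
              (Rabs c * (PI / y) + Rabs c * (PI / y))) as [I HI]; auto.
  - intros x. apply (continuous_plus (fun x => Rabs c * / sq_dist 0 y x));
      apply continuous_mult_fun; auto using continuous_inv_sq_dist; intros; apply continuous_const.
  - intros x. unfold f. rewrite Rabs_mult.
    eapply Rle_trans; [|apply conj_poisson_diff_le; auto].
    rewrite <- (Rmult_1_l (Rabs (conj_poisson 0 y x - conj_poisson c y x))) at 2.
    apply Rmult_le_compat_r; auto using Rabs_pos.
  - apply is_int_R_plus; apply is_int_R_scal, is_int_R_inv_sq_dist; auto.
  - replace 0 with I; auto.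
    apply (is_int_R_periodic_difference w (conj_poisson 0 y) c 1); auto.
    + apply continuous_conj_poisson; auto.
    + intros x. apply Rabs_mult_div_le; [apply sq_dist_pos; auto|].
      unfold sq_dist. replace (x - 0) with x by ring. pose proof (pow2_ge_0 y).
      rewrite Rabs_right; nra.
    + apply (is_int_R_ext f); auto. intros x. unfold f, conj_poisson, sq_dist.
      replace (x - c - 0) with (x - c) by ring. reflexivity.
Qed.

Lemma is_int_R_weighted_two_center_comb a b d a' b' d' e :
  is_int_R (fun x => w x * two_center_comb c y a b d a' b' d' e x)
    ((a + a') * m0 + (b + b') * mx + (d + d') * my).
Proof.
  apply (is_int_R_ext (fun x => w x * poisson_comb a b d 0 y x + w x * poisson_comb a' b' d' c y x
                         + e * (w x * (conj_poisson 0 y x - conj_poisson c y x)))).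
  { intros x. unfold two_center_comb. ring. }
  replace ((a + a') * m0 + (b + b') * mx + (d + d') * my)
    with ((a * m0 + b * mx + d * my) + (a' * m0 + b' * mx + d' * my) + e * 0) by ring.
  apply is_int_R_plus; [apply is_int_R_plus | apply is_int_R_scal].
  - apply is_int_R_weighted_poisson_comb0.
  - apply is_int_R_weighted_poisson_comb_shift.
  - apply is_int_R_weighted_conj_poisson_diff.
Qed.

End Weighted.

(* [re k c y + i * im k c y = (c + 2 i y)^(-k)]; these are the coefficients of the partial
   fraction expansion of a product of kernels centred at [0] and at [c] *)
Definition cdenom (c y : R) : R := c ^ 2 + 4 * y ^ 2.
Definition re1 (c y : R) : R := c / cdenom c y.
Definition im1 (c y : R) : R := - 2 * y / cdenom c y.
Definition re2 (c y : R) : R := (c ^ 2 - 4 * y ^ 2) / cdenom c y ^ 2.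
Definition im2 (c y : R) : R := - 4 * c * y / cdenom c y ^ 2.
Definition re3 (c y : R) : R := (c ^ 3 - 12 * c * y ^ 2) / cdenom c y ^ 3.
Definition im3 (c y : R) : R := (8 * y ^ 3 - 6 * c ^ 2 * y) / cdenom c y ^ 3.

Lemma cdenom_pos c y : 0 < y -> 0 < cdenom c y.
Proof. intros Hy. unfold cdenom. pose proof (pow2_ge_0 c). pose proof (pow_lt y 2 Hy). lra. Qed.

Section ProductDecompositions.
Variables (c y x : R).
Hypothesis Hy : 0 < y.

Lemma Hgrad_poisson_decomp :
  - poisson_dy 0 y x * poisson_dx c y x + poisson_dx 0 y x * poisson_dy c y x
  = two_center_comb c y (- 2 * re3 c y) (re2 c y) (im2 c y) (- 2 * re3 c y) (- re2 c y) (im2 c y)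
      (2 * im3 c y) x.
Proof.
  pose proof (sq_dist_pos 0 y x Hy). pose proof (sq_dist_pos c y x Hy).
  pose proof (cdenom_pos c y Hy).
  unfold two_center_comb, poisson_comb, conj_poisson, poisson, poisson_dx, poisson_dy,
    re2, im2, re3, im3.
  unfold sq_dist, cdenom in *. field. repeat split; lra.
Qed.

Hypothesis Hc : c <> 0.

Lemma poisson_mul_poisson_dy_decomp :
  2 * (poisson c y x * poisson_dy 0 y x)
  = two_center_comb c y (re2 c y - / c ^ 2) (/ c - re1 c y) (- im1 c y) (re2 c y + / c ^ 2) 0 0
      (- im2 c y) x.
Proof.
  pose proof (sq_dist_pos 0 y x Hy). pose proof (sq_dist_pos c y x Hy).
  pose proof (cdenom_pos c y Hy).
  unfold two_center_comb, poisson_comb, conj_poisson, poisson, poisson_dx, poisson_dy,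
    re1, im1, re2, im2.
  unfold sq_dist, cdenom in *. field. repeat split; lra.
Qed.

Lemma poisson_mul_poisson_dx_decomp :
  2 * (poisson c y x * poisson_dx 0 y x)
  = two_center_comb c y (im2 c y) (- im1 c y) (re1 c y - / c) (im2 c y) 0 0 (re2 c y - / c ^ 2) x.
Proof.
  pose proof (sq_dist_pos 0 y x Hy). pose proof (sq_dist_pos c y x Hy).
  pose proof (cdenom_pos c y Hy).
  unfold two_center_comb, poisson_comb, conj_poisson, poisson, poisson_dx, poisson_dy,
    re1, im1, re2, im2.
  unfold sq_dist, cdenom in *. field. repeat split; lra.
Qed.

End ProductDecompositions.

Section Weights.
Variables (y : R) (n : Z).
Hypothesis Hy : 0 < y.
Let c := 2 * PI * IZR n.

Lemma is_int_R_two_center_comb a b d a' b' d' e :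
  is_int_R (two_center_comb c y a b d a' b' d' e) ((a + a') * PI).
Proof.
  apply (is_int_R_ext (fun x => 1 * two_center_comb c y a b d a' b' d' e x)); [intros; ring|].
  replace ((a + a') * PI) with ((a + a') * PI + (b + b') * 0 + (d + d') * 0) by ring.
  apply is_int_R_weighted_two_center_comb; auto.
  - intros; apply continuous_const.
  - intros; rewrite Rabs_R1; lra.
  - apply (is_int_R_ext (poisson 0 y)); [intros; ring | apply is_int_R_poisson0; auto].
  - apply (is_int_R_ext (poisson_dx 0 y)); [intros; ring | apply is_int_R_poisson_dx0; auto].
  - apply (is_int_R_ext (poisson_dy 0 y)); [intros; ring | apply is_int_R_poisson_dy0; auto].
Qed.

Lemma is_int_R_cos_two_center_comb a b d a' b' d' e :
  is_int_R (fun x => cos x * two_center_comb c y a b d a' b' d' e x)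
    ((a + a' - (d + d')) * (PI * exp (- y))).
Proof.
  replace ((a + a' - (d + d')) * (PI * exp (- y)))
    with ((a + a') * (PI * exp (- y)) + (b + b') * 0 + (d + d') * (- (PI * exp (- y)))) by ring.
  apply is_int_R_weighted_two_center_comb; auto.
  - apply continuous_cos.
  - intros; apply Rabs_le, COS_bound.
  - intros; apply periodic_2PI_IZR, cos_period.
  - apply is_int_R_cos_poisson0; auto.
  - apply is_int_R_cos_poisson_dx0; auto.
  - apply is_int_R_cos_poisson_dy0; auto.
Qed.

Lemma is_int_R_sin_two_center_comb a b d a' b' d' e :
  is_int_R (fun x => sin x * two_center_comb c y a b d a' b' d' e x)
    (- (b + b') * (PI * exp (- y))).
Proof.
  replace (- (b + b') * (PI * exp (- y)))
    with ((a + a') * 0 + (b + b') * (- (PI * exp (- y))) + (d + d') * 0) by ring.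
  apply is_int_R_weighted_two_center_comb; auto.
  - apply continuous_sin.
  - intros; apply Rabs_le, SIN_bound.
  - intros; apply periodic_2PI_IZR, sin_period.
  - apply is_int_R_sin_poisson0; auto.
  - apply is_int_R_sin_poisson_dx0; auto.
  - apply is_int_R_sin_poisson_dy0; auto.
Qed.

End Weights.

(** * The two integrals *)

Lemma pk_poisson k x y : pk k x y = / PI * poisson (2 * PI * IZR k) y x.
Proof. reflexivity. Qed.

Lemma dx_pk k x y : 0 < y -> dx (pk k) x y = / PI * poisson_dx (2 * PI * IZR k) y x.
Proof.
  intros Hy. apply is_derive_unique. unfold pk.
  apply (is_derive_scal (fun t => poisson (2 * PI * IZR k) y t)), is_derive_poisson; auto.
Qed.

Lemma dy_pk k x y : 0 < y -> dy (pk k) x y = / PI * poisson_dy (2 * PI * IZR k) y x.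
Proof.
  intros Hy. apply is_derive_unique. unfold pk, poisson_dy, sq_dist.
  pose proof PI_RGT_0.
  derive_kernel (x - 2 * PI * IZR k).
Qed.

Section HyperbolicKernel.
Variable y : R.
Hypothesis Hy : 0 < y.

Lemma sinh_pos : 0 < sinh y.
Proof. rewrite <- sinh_0. apply sinh_lt; auto. Qed.

Lemma cosh_sinh_exp : cosh y = sinh y + exp (- y).
Proof. unfold cosh, sinh. field. Qed.

Lemma cosh_sq_sinh_sq : cosh y ^ 2 - sinh y ^ 2 = 1.
Proof.
  unfold cosh, sinh. rewrite exp_Ropp. pose proof (exp_pos y). field. lra.
Qed.

Lemma cosh_minus_cos_pos x : 0 < cosh y - cos x.
Proof.
  pose proof sinh_pos. pose proof cosh_sq_sinh_sq. pose proof (COS_bound x).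
  assert (0 < cosh y) by (unfold cosh; pose proof (exp_pos y); pose proof (exp_pos (- y)); lra).
  nra.
Qed.

Lemma hinv_eq x : hinv x y = 2 * PI * (cosh y - cos x) / sinh y.
Proof.
  unfold hinv, h. pose proof sinh_pos. pose proof (cosh_minus_cos_pos x). pose proof PI_RGT_0.
  field. repeat split; lra.
Qed.

Lemma dx_hinv x : dx hinv x y = 2 * PI * sin x / sinh y.
Proof.
  unfold dx. rewrite (Derive_ext _ (fun t => 2 * PI * (cosh y - cos t) / sinh y)) by apply hinv_eq.
  apply is_derive_unique. pose proof sinh_pos. auto_derive; [lra | field; lra].
Qed.

Lemma dy_hinv x : dy hinv x y = 2 * PI * (cosh y * cos x - 1) / sinh y ^ 2.
Proof.
  unfold dy. apply is_derive_unique. unfold hinv, h.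
  pose proof (cosh_minus_cos_pos x). pose proof sinh_pos. pose proof PI_RGT_0.
  pose proof cosh_sq_sinh_sq.
  assert (0 < / (2 * PI) * (sinh y * / (cosh y + - cos x))).
  { apply Rmult_lt_0_compat; [apply Rinv_0_lt_compat; lra|].
    apply Rmult_lt_0_compat; [lra | apply Rinv_0_lt_compat; lra]. }
  auto_derive; [repeat split; lra|].
  replace (cosh y * cos x - 1) with (cosh y * cos x - (cosh y ^ 2 - sinh y ^ 2)) by lra.
  field. repeat split; lra.
Qed.

End HyperbolicKernel.

Section TheIntegrals.
Variables (y : R) (n : Z).
Hypotheses (Hy : 0 < y) (Hn : n <> 0%Z).
Let c := 2 * PI * IZR n.

Let c_neq0 : c <> 0.
Proof.
  unfold c. pose proof PI_RGT_0. apply not_0_IZR in Hn.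
  apply Rmult_integral_contrapositive_currified; [|exact Hn].
  apply Rmult_integral_contrapositive_currified; lra.
Qed.

Let center0 : 2 * PI * IZR 0 = 0.
Proof. simpl. ring. Qed.

Lemma is_int_R_hinv_Hgrad_pk :
  is_int_R (fun x => hinv x y * Hgrad_dot (pk 0) (pk n) x y)
    (- 8 * re3 c y + 4 * im2 c y * exp (- y) / sinh y).
Proof.
  pose proof (sinh_pos y Hy). pose proof PI_RGT_0.
  set (K := two_center_comb c y (- 2 * re3 c y) (re2 c y) (im2 c y) (- 2 * re3 c y) (- re2 c y)
              (im2 c y) (2 * im3 c y)).
  set (k := 2 / (PI * sinh y)).
  apply (is_int_R_ext (fun x => k * (cosh y * K x) - k * (cos x * K x))).
  { intros x. unfold Hgrad_dot. rewrite hinv_eq, !dx_pk, !dy_pk, center0 by auto. fold c.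
    replace (cosh y * K x - cos x * K x) with ((cosh y - cos x) * K x) by ring.
    unfold K. rewrite <- Hgrad_poisson_decomp by auto.
    unfold k. field. lra. }
  replace (- 8 * re3 c y + 4 * im2 c y * exp (- y) / sinh y)
    with (k * (cosh y * ((- 2 * re3 c y + - 2 * re3 c y) * PI))
          - k * ((- 2 * re3 c y + - 2 * re3 c y - (im2 c y + im2 c y)) * (PI * exp (- y))))
    by (unfold k; rewrite (cosh_sinh_exp y); field; lra).
  apply is_int_R_minus; apply is_int_R_scal;
    [apply is_int_R_scal, is_int_R_two_center_comb | apply is_int_R_cos_two_center_comb]; auto.
Qed.

Lemma is_int_R_pk_Hgrad_hinv :
  is_int_R (fun x => pk n x y * Hgrad_dot (pk 0) hinv x y)
    ((/ c - re1 c y) / sinh y ^ 2 - 2 * im2 c y * exp (- y) / sinh y).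
Proof.
  pose proof (sinh_pos y Hy). pose proof PI_RGT_0.
  set (Py := two_center_comb c y (re2 c y - / c ^ 2) (/ c - re1 c y) (- im1 c y)
               (re2 c y + / c ^ 2) 0 0 (- im2 c y)).
  set (Px := two_center_comb c y (im2 c y) (- im1 c y) (re1 c y - / c) (im2 c y) 0 0
               (re2 c y - / c ^ 2)).
  set (k := / (PI * sinh y)).
  apply (is_int_R_ext (fun x => - k * (sin x * Py x) + k * cosh y / sinh y * (cos x * Px x)
                                - k / sinh y * Px x)).
  { intros x. unfold Hgrad_dot. rewrite pk_poisson, dx_hinv, dy_hinv, !dx_pk, !dy_pk, center0
      by auto. fold c.
    unfold Py, Px. rewrite <- poisson_mul_poisson_dy_decomp, <- poisson_mul_poisson_dx_decomp
      by auto.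
    unfold k. field. lra. }
  replace ((/ c - re1 c y) / sinh y ^ 2 - 2 * im2 c y * exp (- y) / sinh y)
    with (- k * (- (/ c - re1 c y + 0) * (PI * exp (- y)))
          + k * cosh y / sinh y * ((im2 c y + im2 c y - (re1 c y - / c + 0)) * (PI * exp (- y)))
          - k / sinh y * ((im2 c y + im2 c y) * PI)).
  2:{ unfold k. pose proof (exp_pos y). unfold sinh, cosh in *. rewrite exp_Ropp in *.
      assert (exp y * / exp y = 1) by (field; lra).
      field. repeat split; [lra | nra | exact c_neq0 | lra]. }
  apply is_int_R_minus; [apply is_int_R_plus|]; apply is_int_R_scal.
  - apply is_int_R_sin_two_center_comb; auto.
  - apply is_int_R_cos_two_center_comb; auto.
  - apply is_int_R_two_center_comb; auto.
Qed.

End TheIntegrals.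

Theorem lemma3p10 (y : R) (n : Z) :
  0 < y -> n <> 0%Z ->
  exists I1 I2 : R,
    is_int_R (fun x => hinv x y * Hgrad_dot (pk 0) (pk n) x y) I1 /\
    is_int_R (fun x => pk n x y * Hgrad_dot (pk 0) hinv x y) I2 /\
    I1 + 2 * I2 =
      PI * IZR n * (3 * y ^ 2 - PI ^ 2 * IZR n ^ 2) / (y ^ 2 + PI ^ 2 * IZR n ^ 2) ^ 3
      + y ^ 2 / (PI * IZR n * (y ^ 2 + PI ^ 2 * IZR n ^ 2) * sinh y ^ 2).
Proof.
  intros Hy Hn.
  eexists; eexists; split; [|split].
  - apply is_int_R_hinv_Hgrad_pk; auto.
  - apply is_int_R_pk_Hgrad_hinv; auto.
  - pose proof (sinh_pos y Hy). pose proof PI_RGT_0. apply not_0_IZR in Hn.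
    pose proof (pow_lt y 2 Hy). pose proof (pow2_ge_0 (PI * IZR n)).
    pose proof (pow2_ge_0 (2 * PI * IZR n)).
    unfold re1, re3, im2, cdenom. field. repeat split; auto; lra.
Qed.
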